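(* Let $F_2=\langle r,s\mid\ \rangle$ be the free group of rank two and $\phi_*\colon F_2\to F_2$ the automorphism $r\mapsto s$, $s\mapsto rs$. Then $$\{\chi_\rho\in X(F_2,\mathrm{SL}(2,\mathbb{C}))\mid \phi^*(\chi_\rho)=\overline{\chi_\rho}\}\cong\{x\in\mathbb{C}\mid |x-1|=1\},$$ the homeomorphism being given by $x=\mathrm{trace}(\rho(s))=\chi_\rho(s)$.
   Context: $X(F_2,\mathrm{SL}(2,\mathbb{C}))$ is the $\mathrm{SL}(2,\mathbb{C})$-character variety of $F_2$, whose points are characters $\chi_\rho(\gamma)=\mathrm{trace}(\rho(\gamma))$ of representations $\rho\colon F_2\to\mathrm{SL}(2,\mathbb{C})$. $\phi^*(\chi)=\chi\circ\phi_*$, and $\overline{\chi}(\gamma)=\overline{\chi(\gamma)}$. *)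

From HB Require Import structures.
From mathcomp Require Import all_boot all_order all_algebra.
From mathcomp Require Import complex reals.
Set Implicit Arguments. Unset Strict Implicit. Unset Printing Implicit Defensive.
Import Order.TTheory GRing.Theory Num.Theory.
Local Open Scope ring_scope.
Local Open Scope complex_scope.

(* Elements of the free group F_2 = <r, s | > are represented by words in
   r, r^-1, s, s^-1 (all functions below respect free reduction). *)
Inductive letter := Rl | Ri | Sl | Si.
Definition word := seq letter.
Definition gen_r : word := [:: Rl].
Definition gen_s : word := [:: Sl].

Definition SL2 (R : realType) (A : 'M[R[i]]_2) : Prop := \det A = 1.

(* A representation rho : F_2 -> SL(2,C) is determined by rho(r) = A, rho(s) = B. *)
Definition eval_letter (R : realType) (A B : 'M[R[i]]_2) (l : letter) : 'M[R[i]]_2 :=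
  match l with
  | Rl => A | Ri => invmx A | Sl => B | Si => invmx B
  end.
Definition eval_word (R : realType) (A B : 'M[R[i]]_2) (w : word) : 'M[R[i]]_2 :=
  foldr (fun l M => eval_letter A B l *m M) 1%:M w.

Definition char_of (R : realType) (A B : 'M[R[i]]_2) : word -> R[i] :=
  fun w => \tr (eval_word A B w).

(* Points of X(F_2, SL(2,C)) : characters of representations. *)
Definition is_character (R : realType) (chi : word -> R[i]) : Prop :=
  exists A B : 'M[R[i]]_2, SL2 A /\ SL2 B /\ forall w, chi w = char_of A B w.

Definition phi_letter (l : letter) : word :=
  match l with
  | Rl => [:: Sl] | Ri => [:: Si] | Sl => [:: Rl; Sl] | Si => [:: Si; Ri]
  end.
Definition phi_word (w : word) : word := flatten (map phi_letter w).

Definition phi_star (R : realType) (chi : word -> R[i]) : word -> R[i] :=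
  fun w => chi (phi_word w).

Definition conj_char (R : realType) (chi : word -> R[i]) : word -> R[i] :=
  fun w => (chi w)^*.

Definition fixed_set (R : realType) (chi : word -> R[i]) : Prop :=
  is_character chi /\ forall w, phi_star chi w = conj_char chi w.

Definition circle (R : realType) (x : R[i]) : Prop := `|x - 1| = 1.

Definition continuous_on_set (R : realType) (P : R[i] -> Prop) (f : R[i] -> R[i]) : Prop :=
  forall x, P x -> forall e : R[i], 0 < e ->
    exists d : R[i], 0 < d /\ forall y, P y -> `|y - x| < d -> `|f y - f x| < e.

From HB Require Import structures.
From mathcomp Require Import all_boot all_order all_algebra.
From mathcomp Require Import complex reals.
From mathcomp Require Import ring.
Set Implicit Arguments. Unset Strict Implicit. Unset Printing Implicit Defensive.
Import Order.TTheory GRing.Theory Num.Theory.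
Local Open Scope ring_scope.
Local Open Scope complex_scope.

(* Write x = tr A, y = tr B, z = tr AB for a representation r |-> A, s |-> B
   into SL(2,C).  By the Cayley-Hamilton relations, left multiplication by
   A^(+-1) and B^(+-1) preserves the span of I, A, B, AB and acts on it by
   matrices with integer polynomial entries in (x, y, z); hence every character
   is a trace polynomial of (x, y, z).  Since phi_* maps r, s, rs to s, rs, srs
   and tr BAB = zy - x, the condition phi^* chi = conj chi reads x = conj y,
   z = conj y and zy - x = conj z, i.e. conj y * y - conj y = y, which is
   |y - 1| = 1.  Conversely every triple of traces is realised in SL(2,C), and
   the trace polynomials have integer coefficients, so for y on the circle the
   character with traces (conj y, y, conj y) is fixed.  Its values are
   polynomials in y and conj y, hence Lipschitz on the bounded circle. *)

Section Mx22.
Variable F : comNzRingType.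

Definition mx22 (a b c d : F) : 'M[F]_2 :=
  \matrix_(i, j) if (i : nat) == 0%N then (if (j : nat) == 0%N then a else b)
                 else (if (j : nat) == 0%N then c else d).

Lemma mx22P (A : 'M[F]_2) : exists a b c d, A = mx22 a b c d.
Proof.
exists (A 0 0), (A 0 1), (A 1 0), (A 1 1); apply/matrixP => i j; rewrite mxE.
by case: i => [[|[|//]]] ?; case: j => [[|[|//]]] ? /=; congr (A _ _); apply: val_inj.
Qed.

Ltac mx22_entrywise := apply/matrixP => -[[|[|//]]] ? -[[|[|//]]] ?;
  by rewrite !mxE ?big_ord_recr ?big_ord0 /= ?add0r ?mxE.

Lemma det_mx22 (a b c d : F) : \det (mx22 a b c d) = a * d - b * c.
Proof.
rewrite (expand_det_row _ ord0) !big_ord_recr big_ord0 /= add0r.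
by rewrite /cofactor !det_mx11 /= !mxE /= expr0 expr1; ring.
Qed.

Lemma tr_mx22 (a b c d : F) : \tr (mx22 a b c d) = a + d.
Proof. by rewrite /mxtrace !big_ord_recr big_ord0 /= add0r !mxE. Qed.

Lemma mul_mx22 (a b c d a' b' c' d' : F) :
  mx22 a b c d *m mx22 a' b' c' d' =
  mx22 (a * a' + b * c') (a * b' + b * d') (c * a' + d * c') (c * b' + d * d').
Proof. mx22_entrywise. Qed.

Lemma add_mx22 (a b c d a' b' c' d' : F) :
  mx22 a b c d + mx22 a' b' c' d' = mx22 (a + a') (b + b') (c + c') (d + d').
Proof. mx22_entrywise. Qed.

Lemma opp_mx22 (a b c d : F) : - mx22 a b c d = mx22 (- a) (- b) (- c) (- d).
Proof. mx22_entrywise. Qed.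

Lemma scale_mx22 (k a b c d : F) :
  k *: mx22 a b c d = mx22 (k * a) (k * b) (k * c) (k * d).
Proof. mx22_entrywise. Qed.

Lemma scalar_mx22 (k : F) : k%:M = mx22 k 0 0 k.
Proof. mx22_entrywise. Qed.

End Mx22.

Ltac mx22_ring := rewrite ?(scalar_mx22, opp_mx22, mul_mx22, scale_mx22, add_mx22,
  tr_mx22, det_mx22); congr mx22; rewrite /=; ring.

Lemma mx22_cayley_hamilton (F : comNzRingType) (A : 'M[F]_2) :
  A *m A = \tr A *: A - (\det A)%:M.
Proof. by have [a [b [c [d ->]]]] := mx22P A; mx22_ring. Qed.

Lemma invmx_det1_mx2 (F : comUnitRingType) (A : 'M[F]_2) :
  \det A = 1 -> invmx A = (\tr A)%:M - A.
Proof.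
move=> detA; have unitA : A \in unitmx by rewrite unitmxE detA unitr1.
have inverse : A *m ((\tr A)%:M - A) = 1%:M.
  by rewrite mulmxBr mul_mx_scalar mx22_cayley_hamilton detA opprB addrC subrK.
by rewrite -[invmx A]mulmx1 -inverse mulKmx.
Qed.

Lemma invmxM (F : comUnitRingType) n (A B : 'M[F]_n) : A \in unitmx -> B \in unitmx ->
  invmx (A *m B) = invmx B *m invmx A.
Proof.
move=> uA uB; have uAB : A *m B \in unitmx by rewrite unitmx_mul uA uB.
have inverse : A *m B *m (invmx B *m invmx A) = 1%:M.
  by rewrite mulmxA -(mulmxA A) mulmxV // mulmx1 mulmxV.
by rewrite -[invmx _]mulmx1 -inverse mulKmx.
Qed.

Section FrickeCoordinates.
Variable F : comNzRingType.

Record fricke_coord := FrickeCoord { cI : F; cA : F; cB : F; cAB : F }.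

Definition fricke_mx (A B : 'M[F]_2) (v : fricke_coord) : 'M[F]_2 :=
  (cI v)%:M + cA v *: A + cB v *: B + cAB v *: (A *m B).

Definition fricke_tr (x y z : F) (v : fricke_coord) : F :=
  2 * cI v + cA v * x + cB v * y + cAB v * z.

(* A^2 = (tr A) A - (det A) I *)
Definition fricke_mulA (x dA : F) (v : fricke_coord) : fricke_coord :=
  FrickeCoord (- dA * cA v) (cI v + cA v * x) (- dA * cAB v) (cB v + cAB v * x).

(* B^2 = (tr B) B - (det B) I and BA = (tr AB - tr A tr B) I + (tr B) A + (tr A) B - AB *)
Definition fricke_mulB (x y z dB : F) (v : fricke_coord) : fricke_coord :=
  FrickeCoord (cA v * (z - x * y) - cB v * dB - cAB v * x * dB) (cA v * y + cAB v * dB)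
    (cI v + cA v * x + cB v * y + cAB v * z) (- cA v).

(* If u are the coordinates of M v, then [fricke_adj t u v] are those of (t - M) v;
   for t = tr M, t - M is the adjugate of M. *)
Definition fricke_adj (t : F) (u v : fricke_coord) : fricke_coord :=
  FrickeCoord (t * cI v - cI u) (t * cA v - cA u) (t * cB v - cB u) (t * cAB v - cAB u).

Lemma mulmx_fricke_A A B v :
  A *m fricke_mx A B v = fricke_mx A B (fricke_mulA (\tr A) (\det A) v).
Proof.
have [a [b [c [d ->]]]] := mx22P A; have [a' [b' [c' [d' ->]]]] := mx22P B.
by rewrite /fricke_mx; mx22_ring.
Qed.

Lemma mulmx_fricke_B A B v :
  B *m fricke_mx A B v =
  fricke_mx A B (fricke_mulB (\tr A) (\tr B) (\tr (A *m B)) (\det B) v).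
Proof.
have [a [b [c [d ->]]]] := mx22P A; have [a' [b' [c' [d' ->]]]] := mx22P B.
by rewrite /fricke_mx; mx22_ring.
Qed.

Lemma mulmx_fricke_adjA A B v :
  ((\tr A)%:M - A) *m fricke_mx A B v =
  fricke_mx A B (fricke_adj (\tr A) (fricke_mulA (\tr A) (\det A) v) v).
Proof.
have [a [b [c [d ->]]]] := mx22P A; have [a' [b' [c' [d' ->]]]] := mx22P B.
by rewrite /fricke_mx; mx22_ring.
Qed.

Lemma mulmx_fricke_adjB A B v :
  ((\tr B)%:M - B) *m fricke_mx A B v = fricke_mx A B
    (fricke_adj (\tr B) (fricke_mulB (\tr A) (\tr B) (\tr (A *m B)) (\det B) v) v).
Proof.
have [a [b [c [d ->]]]] := mx22P A; have [a' [b' [c' [d' ->]]]] := mx22P B.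
by rewrite /fricke_mx; mx22_ring.
Qed.

Lemma tr_fricke_mx A B v :
  \tr (fricke_mx A B v) = fricke_tr (\tr A) (\tr B) (\tr (A *m B)) v.
Proof.
have [a [b [c [d ->]]]] := mx22P A; have [a' [b' [c' [d' ->]]]] := mx22P B.
by rewrite /fricke_mx /fricke_tr ?(scalar_mx22, mul_mx22, scale_mx22, add_mx22, tr_mx22); ring.
Qed.

Definition fricke_letter (x y z : F) (l : letter) (v : fricke_coord) : fricke_coord :=
  match l with
  | Rl => fricke_mulA x 1 v
  | Ri => fricke_adj x (fricke_mulA x 1 v) v
  | Sl => fricke_mulB x y z 1 v
  | Si => fricke_adj y (fricke_mulB x y z 1 v) v
  end.

Definition fricke_coord_of_word (x y z : F) (w : word) : fricke_coord :=
  foldr (fricke_letter x y z) (FrickeCoord 1 0 0 0) w.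

Definition fricke_poly (x y z : F) (w : word) : F :=
  fricke_tr x y z (fricke_coord_of_word x y z w).

Lemma fricke_poly_r x y z : fricke_poly x y z gen_r = x.
Proof. by rewrite /fricke_poly /fricke_tr /=; ring. Qed.

Lemma fricke_poly_s x y z : fricke_poly x y z gen_s = y.
Proof. by rewrite /fricke_poly /fricke_tr /=; ring. Qed.

Lemma fricke_poly_rs x y z : fricke_poly x y z [:: Rl; Sl] = z.
Proof. by rewrite /fricke_poly /fricke_tr /=; ring. Qed.

Lemma fricke_poly_srs x y z : fricke_poly x y z [:: Sl; Rl; Sl] = z * y - x.
Proof. by rewrite /fricke_poly /fricke_tr /=; ring. Qed.

End FrickeCoordinates.

Definition map_fricke_coord (F G : comNzRingType) (f : F -> G) (v : fricke_coord F) :=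
  FrickeCoord (f (cI v)) (f (cA v)) (f (cB v)) (f (cAB v)).

Lemma fricke_coord_of_word_rmorph (F G : comNzRingType) (f : {rmorphism F -> G}) x y z w :
  map_fricke_coord f (fricke_coord_of_word x y z w) =
  fricke_coord_of_word (f x) (f y) (f z) w.
Proof.
rewrite /fricke_coord_of_word; elim: w => [|l w /= <-].
  by rewrite /map_fricke_coord rmorph1 rmorph0.
by case: l; congr FrickeCoord; rewrite /= ?(rmorphD, rmorphB, rmorphM, rmorphN, rmorph1).
Qed.

Lemma fricke_poly_rmorph (F G : comNzRingType) (f : {rmorphism F -> G}) x y z w :
  f (fricke_poly x y z w) = fricke_poly (f x) (f y) (f z) w.
Proof.
rewrite /fricke_poly -fricke_coord_of_word_rmorph /fricke_tr /=.
by rewrite !rmorphD !rmorphM rmorph_nat.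
Qed.

Section SL2Characters.
Variable R : realType.
Implicit Types (A B : 'M[R[i]]_2) (x y z c : R[i]) (chi : word -> R[i]).

(* The arguments of [fricke_poly] are in ring_scope, where x^* is Num.conj
   rather than conjc; the two are convertible. *)
Lemma fricke_poly_conj x y z w : (fricke_poly x y z w)^* = fricke_poly x^* y^* z^* w.
Proof. exact: fricke_poly_rmorph. Qed.

Lemma SL2_unitmx A : SL2 A -> A \in unitmx.
Proof. by rewrite /SL2 unitmxE => ->; rewrite unitr1. Qed.

Lemma SL2_mul A B : SL2 A -> SL2 B -> SL2 (A *m B).
Proof. by rewrite /SL2 det_mulmx => -> ->; rewrite mulr1. Qed.

Lemma eval_word_fricke A B w : SL2 A -> SL2 B ->
  eval_word A B w = fricke_mx A B (fricke_coord_of_word (\tr A) (\tr B) (\tr (A *m B)) w).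
Proof.
move=> sA sB; elim: w => [|l w IH] /=; first by rewrite /fricke_mx /= !scale0r !addr0.
rewrite IH; case: l => /=; rewrite ?invmx_det1_mx2 //.
- by rewrite mulmx_fricke_A sA.
- by rewrite mulmx_fricke_adjA sA.
- by rewrite mulmx_fricke_B sB.
- by rewrite mulmx_fricke_adjB sB.
Qed.

Lemma char_of_fricke A B : SL2 A -> SL2 B ->
  char_of A B =1 fricke_poly (\tr A) (\tr B) (\tr (A *m B)).
Proof. by move=> sA sB w; rewrite /char_of eval_word_fricke // tr_fricke_mx. Qed.

Lemma eval_word_cat A B w1 w2 :
  eval_word A B (w1 ++ w2) = eval_word A B w1 *m eval_word A B w2.
Proof. by elim: w1 => [|l w IH] /=; rewrite ?mul1mx // IH mulmxA. Qed.

Lemma eval_word_phi A B w : SL2 A -> SL2 B ->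
  eval_word A B (phi_word w) = eval_word B (A *m B) w.
Proof.
move=> /SL2_unitmx uA /SL2_unitmx uB; elim: w => [|l w IH] //.
rewrite /phi_word /= -/(phi_word w) eval_word_cat IH.
by case: l => /=; rewrite ?mulmx1 // invmxM.
Qed.

Lemma char_of_phi_word A B w : SL2 A -> SL2 B ->
  char_of A B (phi_word w) = char_of B (A *m B) w.
Proof. by move=> sA sB; rewrite /char_of eval_word_phi. Qed.

Lemma SL2_traces_onto x y z :
  exists A B, [/\ SL2 A, SL2 B, \tr A = x, \tr B = y & \tr (A *m B) = z].
Proof.
(* q is a root of q^2 + z q + 1, which makes det B = 1. *)
set q := (sqrtC (z ^+ 2 - 4) - z) / 2.
have q_root : q * (q + z) = -1.
  have -> : q * (q + z) = (sqrtC (z ^+ 2 - 4) ^+ 2 - z ^+ 2) / 4.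
    by rewrite /q; field.
  by rewrite sqrtCK; field.
exists (mx22 x 1 (-1) 0), (mx22 0 q (q + z) y).
rewrite /SL2 mul_mx22 !det_mx22 !tr_mx22; split; try ring.
by rewrite mul0r q_root; ring.
Qed.

Lemma circleP y : circle y <-> y^* * y - y^* = y.
Proof.
have normE : `|y - 1| ^+ 2 = y^* * y - y^* - y + 1.
  by rewrite sqr_normc rmorphB rmorph1; ring.
rewrite /circle; split=> [hy | hy].
  move: normE; rewrite hy expr1n -{1}[1]add0r => /addIr /eqP.
  by rewrite eq_sym subr_eq0 => /eqP.
by apply/eqP; rewrite -(sqrp_eq1 (normr_ge0 _)) normE hy subrr add0r.
Qed.

Lemma fixed_set_fricke chi : fixed_set chi ->
  circle (chi gen_s) /\ chi =1 fricke_poly (chi gen_s)^* (chi gen_s) (chi gen_s)^*.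
Proof.
move=> [[A [B [sA [sB charE]]]] fixed].
set x := \tr A; set y := \tr B; set z := \tr (A *m B).
have chiE : chi =1 fricke_poly x y z by move=> w; rewrite charE char_of_fricke.
have := fixed gen_r; have := fixed gen_s; have := fixed [:: Rl; Sl].
rewrite /phi_star /conj_char !chiE ![phi_word _]/=.
rewrite fricke_poly_srs fricke_poly_rs fricke_poly_s fricke_poly_r => srs rs s.
have xE : x = y^* by rewrite s conjcK.
split; first by apply/circleP; move: srs; rewrite rs xE conjcK.
by move=> w; rewrite chiE xE rs.
Qed.

Lemma circle_fixed_set c : circle c -> fixed_set (fricke_poly c^* c c^*).
Proof.
move=> /circleP c_eq; have [A [B [sA sB trA trB trAB]]] := SL2_traces_onto c^* c c^*.
have charE : fricke_poly c^* c c^* =1 char_of A B.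
  by move=> w; rewrite char_of_fricke // trA trB trAB.
have trBAB : \tr (B *m (A *m B)) = c.
  have := char_of_fricke sA sB [:: Sl; Rl; Sl].
  by rewrite fricke_poly_srs /char_of /= mulmx1 trA trB trAB c_eq.
split; first by exists A, B.
move=> w; rewrite /phi_star /conj_char fricke_poly_conj conjCK charE.
by rewrite char_of_phi_word // (char_of_fricke sB (SL2_mul sA sB)) trB trAB trBAB.
Qed.
End SL2Characters.

Section LipschitzOnCircle.
Variable R : realType.
Implicit Types (f g : R[i] -> R[i]) (x y : R[i]).

(* Boundedness is what makes the class closed under products. *)
Definition lipschitz_bounded_on_circle f := exists K M : R[i], [/\ 0 <= K, 0 <= M,
  forall x y, circle x -> circle y -> `|f y - f x| <= K * `|y - x|
  & forall x, circle x -> `|f x| <= M].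

Lemma circle_norm_le2 x : circle x -> `|x| <= 2.
Proof.
move=> cx; rewrite -[x](subrK 1).
by apply: le_trans (ler_normD _ _) _; rewrite cx normr1.
Qed.

Lemma lipschitz_bounded_cst k : lipschitz_bounded_on_circle (fun=> k).
Proof.
by exists 0, `|k|; split=> // x y _ _; rewrite subrr normr0 mul0r.
Qed.

Lemma lipschitz_bounded_id : lipschitz_bounded_on_circle id.
Proof. by exists 1, 2; split=> // [x y _ _|x]; [rewrite mul1r | exact: circle_norm_le2]. Qed.

Lemma lipschitz_bounded_conj : lipschitz_bounded_on_circle (fun x => Num.conj x).
Proof.
exists 1, 2; split=> // [x y _ _|x cx]; first by rewrite mul1r -rmorphB norm_conjC.
by rewrite norm_conjC; exact: circle_norm_le2.
Qed.

Lemma lipschitz_bounded_add f g : lipschitz_bounded_on_circle f ->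
  lipschitz_bounded_on_circle g -> lipschitz_bounded_on_circle (fun x => f x + g x).
Proof.
move=> [K1 [M1 [K1ge0 M1ge0 f_lip f_bd]]] [K2 [M2 [K2ge0 M2ge0 g_lip g_bd]]].
exists (K1 + K2), (M1 + M2); split=> [||x y cx cy|x cx]; try exact: addr_ge0.
  rewrite opprD addrACA mulrDl; apply: le_trans (ler_normD _ _) _.
  by apply: lerD; [exact: f_lip | exact: g_lip].
by apply: le_trans (ler_normD _ _) _; apply: lerD; [exact: f_bd | exact: g_bd].
Qed.

Lemma lipschitz_bounded_opp f : lipschitz_bounded_on_circle f ->
  lipschitz_bounded_on_circle (fun x => - f x).
Proof.
move=> [K [M [Kge0 Mge0 f_lip f_bd]]]; exists K, M; split=> // [x y cx cy|x cx].
  by rewrite -opprD normrN; exact: f_lip.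
by rewrite normrN; exact: f_bd.
Qed.

Lemma lipschitz_bounded_mul f g : lipschitz_bounded_on_circle f ->
  lipschitz_bounded_on_circle g -> lipschitz_bounded_on_circle (fun x => f x * g x).
Proof.
move=> [K1 [M1 [K1ge0 M1ge0 f_lip f_bd]]] [K2 [M2 [K2ge0 M2ge0 g_lip g_bd]]].
exists (M1 * K2 + M2 * K1), (M1 * M2).
split=> [||x y cx cy|x cx]; rewrite ?addr_ge0 ?mulr_ge0 //; last first.
  by rewrite normrM ler_pM ?normr_ge0 ?f_bd ?g_bd.
have -> : f y * g y - f x * g x = f y * (g y - g x) + g x * (f y - f x) by ring.
apply: le_trans (ler_normD _ _) _; rewrite mulrDl !normrM -!mulrA.
by apply: lerD; apply: ler_pM; rewrite ?normr_ge0 ?mulr_ge0 ?normr_ge0 ?f_bd ?g_bd ?f_lip ?g_lip.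
Qed.

Lemma lipschitz_bounded_continuous f : lipschitz_bounded_on_circle f ->
  continuous_on_set (@circle R) f.
Proof.
move=> [K [M [Kge0 _ f_lip _]]] x cx e e_gt0.
have K1_gt0 : 0 < K + 1 by rewrite ltr_wpDl.
exists (e / (K + 1)); split=> [|y cy yx_lt]; first exact: divr_gt0.
apply: le_lt_trans (f_lip _ _ cx cy) _.
apply: le_lt_trans (_ : _ <= (K + 1) * `|y - x|) _.
  by rewrite ler_wpM2r ?normr_ge0 // lerDl.
by rewrite -ltr_pdivlMl // mulrC.
Qed.

Ltac lipschitz_bounded := repeat match goal with
  | |- lipschitz_bounded_on_circle (fun _ => ?k) => apply: lipschitz_bounded_cst
  | |- lipschitz_bounded_on_circle (fun x => x) => apply: lipschitz_bounded_id
  | |- lipschitz_bounded_on_circle (fun x => Num.conj x) => apply: lipschitz_bounded_conj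
  | |- lipschitz_bounded_on_circle (fun x => @?f x + @?g x) => apply: (@lipschitz_bounded_add f g)
  | |- lipschitz_bounded_on_circle (fun x => - @?f x) => apply: (@lipschitz_bounded_opp f)
  | |- lipschitz_bounded_on_circle (fun x => @?f x * @?g x) => apply: (@lipschitz_bounded_mul f g)
  | H : ?G |- ?G => exact: H
  end.

Lemma lipschitz_bounded_fricke_coord w :
  let v x := fricke_coord_of_word x^* x x^* w in
  [/\ lipschitz_bounded_on_circle (fun x => cI (v x)),
      lipschitz_bounded_on_circle (fun x => cA (v x)),
      lipschitz_bounded_on_circle (fun x => cB (v x)) &
      lipschitz_bounded_on_circle (fun x => cAB (v x))].
Proof.
rewrite /fricke_coord_of_word; elim: w => [|l w [LI LA LB LAB]] /=.
  by split; apply: lipschitz_bounded_cst.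
by case: l; split; rewrite /=; lipschitz_bounded.
Qed.

Lemma lipschitz_bounded_fricke_poly w :
  lipschitz_bounded_on_circle (fun x => fricke_poly x^* x x^* w).
Proof.
have [LI LA LB LAB] := lipschitz_bounded_fricke_coord w.
rewrite /fricke_poly /fricke_tr; lipschitz_bounded.
Qed.
End LipschitzOnCircle.

Theorem lemma6p4 (R : realType) :
  (* the map chi |-> chi(s) sends the fixed set into the circle *)
  (forall chi : word -> R[i], fixed_set chi -> circle (chi gen_s)) /\
  (* it is injective on the fixed set *)
  (forall chi1 chi2 : word -> R[i], fixed_set chi1 -> fixed_set chi2 ->
     chi1 gen_s = chi2 gen_s -> forall w, chi1 w = chi2 w) /\
  (* it is onto the circle, with continuous inverse *)
  (exists g : R[i] -> (word -> R[i]),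
     (forall x, circle x -> fixed_set (g x) /\ g x gen_s = x) /\
     (forall w, continuous_on_set (@circle R) (fun x => g x w))).
Proof.
split; first by move=> chi /fixed_set_fricke [].
split.
  move=> chi1 chi2 /fixed_set_fricke [_ chi1E] /fixed_set_fricke [_ chi2E] s12 w.
  by rewrite chi1E chi2E s12.
exists (fun x => fricke_poly x^* x x^*); split.
  by move=> x cx; split; [exact: circle_fixed_set | exact: fricke_poly_s].
by move=> w; apply/lipschitz_bounded_continuous/lipschitz_bounded_fricke_poly.
Qed.
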